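(* Let $p,q\in\mathbb R^3$ with $|p|\ge\frac32q^0$. Then for any multi-index $\beta\in\mathbb N^3\setminus\{0\}$ (derivatives $\partial_\beta$ in $p$), $$|\partial_\beta g|\lesssim\langle q\rangle^{|\beta|},\qquad \Big|\partial_\beta\Big(\frac1g\Big)\Big|\lesssim\frac{\langle q\rangle^{|\beta|}}{g^2},$$ and $$|\partial_\beta\sqrt{\mathfrak s}|\lesssim\langle q\rangle^{|\beta|},\qquad \Big|\partial_\beta\Big(\frac1{\sqrt{\mathfrak s}}\Big)\Big|\lesssim\frac{\langle q\rangle^{|\beta|}}{g^2}.$$
   Context: $\mathfrak c\ge1$ is the speed of light; $p^0=\sqrt{\mathfrak c^2+|p|^2}$, $q^0=\sqrt{\mathfrak c^2+|q|^2}$, $\langle q\rangle=\sqrt{1+|q|^2}$; $\mathfrak s=2(p^0q^0-p\cdot q+\mathfrak c^2)$, $g=\sqrt{2(p^0q^0-p\cdot q-\mathfrak c^2)}$. Implicit constants are independent of $\mathfrak c$, $p$, $q$. *)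

From Stdlib Require Import Reals.
From Coquelicot Require Import Coquelicot.
Open Scope R_scope.

Definition dot3 (a1 a2 a3 b1 b2 b3 : R) : R := a1 * b1 + a2 * b2 + a3 * b3.
Definition sq3 (a1 a2 a3 : R) : R := a1 ^ 2 + a2 ^ 2 + a3 ^ 2.
Definition norm3 (a1 a2 a3 : R) : R := sqrt (sq3 a1 a2 a3).

(* p^0 = sqrt(c^2 + |p|^2) *)
Definition energy (c a1 a2 a3 : R) : R := sqrt (c ^ 2 + sq3 a1 a2 a3).
Definition japan (a1 a2 a3 : R) : R := sqrt (1 + sq3 a1 a2 a3).

Definition mand_s (c p1 p2 p3 q1 q2 q3 : R) : R :=
  2 * (energy c p1 p2 p3 * energy c q1 q2 q3 - dot3 p1 p2 p3 q1 q2 q3 + c ^ 2).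
Definition rel_g (c p1 p2 p3 q1 q2 q3 : R) : R :=
  sqrt (2 * (energy c p1 p2 p3 * energy c q1 q2 q3 - dot3 p1 p2 p3 q1 q2 q3 - c ^ 2)).

Fixpoint iterD (n : nat) (f : R -> R) : R -> R :=
  match n with
  | O => f
  | S m => Derive (iterD m f)
  end.

Definition dmulti (b1 b2 b3 : nat) (F : R -> R -> R -> R) (x1 x2 x3 : R) : R :=
  iterD b1 (fun y1 =>
    iterD b2 (fun y2 =>
      iterD b3 (fun y3 => F y1 y2 y3) x3) x2) x1.

(* Write W = sqrt (2 (p^0 q^0 - p.q) + κ), so that g is W with κ = -2c^2 and sqrt s is W
   with κ = 2c^2.  Since d_i p^0 = p_i / p^0 and d_i W = (p_i q^0 / p^0 - q_i) / W, every
   derivative d_beta (W^n0) is a sum, with coefficients independent of c, p and q, of terms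
     p^a q^d (q^0)^e (p^0)^(-s-|a|) W^(n0 - 2(|d|+e))      with s + |d| + e = |beta|.
   In the region |p| >= 3/2 q^0 we have 1 <= p^0, W <= 3 p^0, q^0 <= 4 <q> W and
   q^0 <= 12 <q> W^2, so each such term is at most (12 <q>)^|beta| W^(n0-1).  The cases
   n0 = 1 and n0 = -1 give the four estimates, using g <= sqrt s for the last one. *)

From Stdlib Require Import Reals Lra Lia List.
From Coquelicot Require Import Coquelicot.
Import ListNotations.
Open Scope R_scope.

Inductive axis := ax1 | ax2 | ax3.

Definition axis_eq_dec (i j : axis) : {i = j} + {i <> j}.
Proof. decide equality. Defined.

Record vec := Vec { vx1 : R; vx2 : R; vx3 : R }.

Definition coord (i : axis) (v : vec) : R :=
  match i with ax1 => vx1 v | ax2 => vx2 v | ax3 => vx3 v end.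

Definition set_coord (i : axis) (v : vec) (t : R) : vec :=
  match i with
  | ax1 => Vec t (vx2 v) (vx3 v)
  | ax2 => Vec (vx1 v) t (vx3 v)
  | ax3 => Vec (vx1 v) (vx2 v) t
  end.

Lemma coord_set_coord i v t : coord i (set_coord i v t) = t.
Proof. now destruct i. Qed.

Definition prod3 (f : axis -> R) : R := f ax1 * f ax2 * f ax3.
Definition deg (a : axis -> nat) : nat := (a ax1 + a ax2 + a ax3)%nat.

Definition bump (a : axis -> nat) (i : axis) : axis -> nat :=
  fun j => if axis_eq_dec j i then S (a j) else a j.
Definition lower (a : axis -> nat) (i : axis) : axis -> nat :=
  fun j => if axis_eq_dec j i then pred (a j) else a j.

Lemma deg_bump a i : deg (bump a i) = S (deg a).
Proof. destruct i; unfold deg, bump; simpl; lia. Qed.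

Lemma deg_lower a i : a i <> 0%nat -> S (deg (lower a i)) = deg a.
Proof. destruct i; unfold deg, lower; simpl; lia. Qed.

Definition vpow (a : axis -> nat) (v : vec) : R := prod3 (fun j => coord j v ^ a j).

Lemma vpow_bump a i v : vpow (bump a i) v = coord i v * vpow a v.
Proof. destruct i; unfold vpow, prod3, bump; simpl; ring. Qed.

Lemma is_derive_vpow a i v t :
  is_derive (fun s => vpow a (set_coord i v s)) t
    (INR (a i) * vpow (lower a i) (set_coord i v t)).
Proof.
  destruct i; unfold vpow, prod3, lower; simpl; auto_derive; auto; ring.
Qed.

Lemma vpow_abs_le a v B :
  (forall j, Rabs (coord j v) <= B) -> Rabs (vpow a v) <= B ^ deg a.
Proof.
  intros H. unfold vpow, prod3, deg. rewrite !pow_add, !Rabs_mult, <- !RPow_abs.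
  pose proof (H ax1); pose proof (H ax2); pose proof (H ax3).
  pose proof (Rabs_pos (coord ax1 v)); pose proof (Rabs_pos (coord ax2 v)); pose proof (Rabs_pos (coord ax3 v)).
  repeat apply Rmult_le_compat; try apply pow_le; try apply Rmult_le_pos; try apply pow_le;
    try apply pow_incr; auto.
Qed.

Definition venergy (c : R) (v : vec) : R := energy c (vx1 v) (vx2 v) (vx3 v).
Definition vnorm (v : vec) : R := norm3 (vx1 v) (vx2 v) (vx3 v).
Definition vdot (v w : vec) : R := dot3 (vx1 v) (vx2 v) (vx3 v) (vx1 w) (vx2 w) (vx3 w).

Definition vjapan (v : vec) : R := japan (vx1 v) (vx2 v) (vx3 v).

Definition radicand (c : R) (q : vec) (κ : R) (v : vec) : R :=
  2 * (venergy c v * venergy c q - vdot v q) + κ.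
Definition root (c : R) (q : vec) (κ : R) (v : vec) : R := sqrt (radicand c q κ v).

Lemma vnorm_nonneg v : 0 <= vnorm v.
Proof. apply sqrt_pos. Qed.

Lemma vnorm_sq v : vnorm v ^ 2 = vx1 v ^ 2 + vx2 v ^ 2 + vx3 v ^ 2.
Proof. unfold vnorm, norm3, sq3. rewrite pow2_sqrt; nra. Qed.

Lemma venergy_sq c v : venergy c v ^ 2 = c ^ 2 + vnorm v ^ 2.
Proof. rewrite vnorm_sq. unfold venergy, energy, sq3. rewrite pow2_sqrt; nra. Qed.

Lemma vjapan_sq v : vjapan v ^ 2 = 1 + vnorm v ^ 2.
Proof. rewrite vnorm_sq. unfold vjapan, japan, sq3. rewrite pow2_sqrt; nra. Qed.

Lemma vjapan_ge_1 v : 1 <= vjapan v.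
Proof.
  pose proof (vjapan_sq v); pose proof (pow2_ge_0 (vnorm v)).
  assert (0 <= vjapan v) by apply sqrt_pos. nra.
Qed.

Lemma vdot_abs_le v w : Rabs (vdot v w) <= vnorm v * vnorm w.
Proof.
  pose proof (vnorm_nonneg v); pose proof (vnorm_nonneg w).
  rewrite <- (Rabs_pos_eq (vnorm v * vnorm w)) by nra.
  apply Rsqr_le_abs_0. unfold Rsqr.
  replace (vnorm v * vnorm w * (vnorm v * vnorm w)) with (vnorm v ^ 2 * vnorm w ^ 2) by ring.
  rewrite !vnorm_sq. unfold vdot, dot3.
  (* Lagrange's identity *)
  pose proof (pow2_ge_0 (vx1 v * vx2 w - vx2 v * vx1 w)).
  pose proof (pow2_ge_0 (vx1 v * vx3 w - vx3 v * vx1 w)).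
  pose proof (pow2_ge_0 (vx2 v * vx3 w - vx3 v * vx2 w)). nra.
Qed.

Lemma coord_abs_le_vnorm j v : Rabs (coord j v) <= vnorm v.
Proof.
  pose proof (vnorm_sq v); pose proof (vnorm_nonneg v).
  rewrite <- (Rabs_pos_eq (vnorm v)) by assumption. apply Rsqr_le_abs_0. unfold Rsqr.
  destruct j; simpl; nra.
Qed.

Lemma vnorm_le_venergy c v : vnorm v <= venergy c v.
Proof.
  unfold vnorm, venergy, norm3, energy. apply sqrt_le_1_alt.
  pose proof (pow2_ge_0 c). lra.
Qed.

Lemma venergy_le_japan c v : 1 <= c -> venergy c v <= c * vjapan v.
Proof.
  intros Hc. assert (0 <= vjapan v) by apply sqrt_pos.
  apply Rsqr_incr_0_var; unfold Rsqr; [|nra].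
  replace (venergy c v * venergy c v) with (venergy c v ^ 2) by ring.
  replace (c * vjapan v * (c * vjapan v)) with (c ^ 2 * vjapan v ^ 2) by ring.
  rewrite venergy_sq, vjapan_sq.
  assert (0 <= (c ^ 2 - 1) * vnorm v ^ 2) by (apply Rmult_le_pos; nra). nra.
Qed.

Lemma energy_gap_lower_bound c a b P Q : 1 <= c -> 0 <= a -> 0 <= b -> 0 <= P -> 0 <= Q ->
  P ^ 2 = c ^ 2 + a ^ 2 -> Q ^ 2 = c ^ 2 + b ^ 2 -> 3 / 2 * Q <= a ->
  c ^ 2 * P <= 24 * Q * (P * Q - a * b - c ^ 2).
Proof.
  intros Hc Ha Hb HP HQ EP EQ Haq.
  (* (PQ - ab - c^2)(PQ + ab) = c^2 (P^2 + b^2 - PQ - ab), and the last factor is at least P^2/12 *)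
  assert (Hid : (P * Q - a * b - c ^ 2) * (P * Q + a * b) = c ^ 2 * (P ^ 2 + b ^ 2 - P * Q - a * b)).
  { replace ((P * Q - a * b - c ^ 2) * (P * Q + a * b))
      with (P ^ 2 * Q ^ 2 - a ^ 2 * b ^ 2 - c ^ 2 * (P * Q + a * b)) by ring.
    rewrite EP, EQ. ring. }
  assert (HaP : a <= P) by nra.
  assert (HbQ : b <= Q) by nra.
  assert (HN : P ^ 2 / 12 <= P ^ 2 + b ^ 2 - P * Q - a * b).
  { assert (P * Q <= 2 / 3 * P ^ 2) by nra. pose proof (pow2_ge_0 (b - a / 2)). nra. }
  assert (HPQ : a * b <= P * Q) by nra.
  assert (HP1 : 1 <= P) by nra.
  set (X := P * Q - a * b - c ^ 2) in *.
  assert (HXl : c ^ 2 * P ^ 2 / 12 <= X * (P * Q + a * b)) by (rewrite Hid; nra).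
  assert (HX : 0 < X).
  { destruct (Rle_or_lt X 0) as [HX|HX]; [|exact HX].
    pose proof (Rmult_le_compat_r (P * Q + a * b) X 0 ltac:(nra) HX).
    assert (0 < c ^ 2 * P ^ 2) by (apply Rmult_lt_0_compat; nra). lra. }
  assert (c ^ 2 * P * P <= 24 * Q * X * P) by nra.
  nra.
Qed.

Lemma region_bounds c κ p q : 1 <= c -> Rabs κ <= 2 * c ^ 2 -> vnorm p >= 3 / 2 * venergy c q ->
  0 < radicand c q κ p /\ 1 <= venergy c p /\ root c q κ p <= 3 * venergy c p /\
  venergy c q <= 4 * vjapan q * root c q κ p /\ venergy c q <= 12 * vjapan q * root c q κ p ^ 2.
Proof.
  intros Hc Hk Hp.
  pose proof (energy_gap_lower_bound c (vnorm p) (vnorm q) (venergy c p) (venergy c q) Hc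
    (vnorm_nonneg p) (vnorm_nonneg q) (sqrt_pos _) (sqrt_pos _)
    (venergy_sq c p) (venergy_sq c q) (Rge_le _ _ Hp)) as Hgap.
  pose proof (Rle_abs κ); pose proof (Rle_abs (- κ)).
  pose proof (Rle_abs (vdot p q)); pose proof (Rle_abs (- vdot p q)).
  rewrite Rabs_Ropp in *.
  pose proof (vdot_abs_le p q).
  pose proof (vnorm_le_venergy c p); pose proof (vnorm_le_venergy c q).
  pose proof (venergy_le_japan c q Hc).
  pose proof (venergy_sq c p); pose proof (venergy_sq c q).
  pose proof (vnorm_nonneg p); pose proof (vnorm_nonneg q).
  assert (0 <= venergy c p) by apply sqrt_pos. assert (0 <= venergy c q) by apply sqrt_pos.
  assert (0 <= vjapan q) by apply sqrt_pos.
  set (P := venergy c p) in *. set (Q := venergy c q) in *. set (J := vjapan q) in *.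
  set (a := vnorm p) in *. set (b := vnorm q) in *.
  assert (HcQ : c <= Q) by nra. assert (HQP : Q <= P) by nra. assert (HP1 : 1 <= P) by nra.
  assert (Hab : a * b <= P * Q) by nra.
  assert (Hlow : c ^ 2 * P <= 12 * Q * radicand c q κ p) by (unfold radicand; fold P Q; nra).
  assert (Hpos : 0 < radicand c q κ p).
  { assert (0 < c ^ 2 * P) by (apply Rmult_lt_0_compat; nra). nra. }
  assert (Hup : radicand c q κ p <= 6 * P ^ 2) by (unfold radicand; fold P Q; nra).
  assert (HW2 : root c q κ p ^ 2 = radicand c q κ p) by (apply pow2_sqrt; lra).
  assert (HW0 : 0 <= root c q κ p) by apply sqrt_pos.
  set (W := root c q κ p) in *. set (X := radicand c q κ p) in *.
  assert (HQ2 : Q * Q <= c * J * P) by nra.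
  assert (HQJ : Q <= 12 * J * X).
  { assert (Q * Q <= 12 * J * X * Q) by nra.
    destruct (Rle_lt_dec Q 0); [nra|]. nra. }
  repeat split; try lra.
  - apply Rsqr_incr_0_var; unfold Rsqr; nra.
  - apply Rsqr_incr_0_var; unfold Rsqr; [|nra].
    assert (Q * Q * Q <= 12 * J ^ 2 * X * Q) by nra.
    destruct (Rle_lt_dec Q 0); nra.
  - rewrite HW2. exact HQJ.
Qed.

Lemma venergy_pos c v : 0 < c -> 0 < venergy c v.
Proof. intros; unfold venergy, energy, sq3; apply sqrt_lt_R0; nra. Qed.

Lemma is_derive_venergy c i v t : 0 < c ->
  is_derive (fun s => venergy c (set_coord i v s)) t (t / venergy c (set_coord i v t)).
Proof.
  intros Hc. destruct i; unfold venergy, energy, sq3; simpl; auto_derive; try nra;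
    field; apply Rgt_not_eq, sqrt_lt_R0; nra.
Qed.

Lemma is_derive_radicand c q κ i v t : 0 < c ->
  is_derive (fun s => radicand c q κ (set_coord i v s)) t
    (2 * (t * venergy c q / venergy c (set_coord i v t) - coord i q)).
Proof.
  intros Hc. pose proof (venergy_pos c (set_coord i v t) Hc) as HP.
  destruct i; unfold radicand, venergy, vdot, energy, dot3, sq3 in *; simpl in *;
    auto_derive; try nra; field; lra.
Qed.

Lemma is_derive_root c q κ i v t : 0 < c -> 0 < radicand c q κ (set_coord i v t) ->
  is_derive (fun s => root c q κ (set_coord i v s)) t
    ((t * venergy c q / venergy c (set_coord i v t) - coord i q) / root c q κ (set_coord i v t)).
Proof.
  intros Hc Hr. unfold root.
  replace ((t * venergy c q / venergy c (set_coord i v t) - coord i q) / sqrt (radicand c q κ (set_coord i v t)))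
    with (2 * (t * venergy c q / venergy c (set_coord i v t) - coord i q) / (2 * sqrt (radicand c q κ (set_coord i v t)))).
  - apply is_derive_sqrt; [apply is_derive_radicand|]; assumption.
  - field; split; apply Rgt_not_eq; [apply venergy_pos | apply sqrt_lt_R0]; assumption.
Qed.

Lemma is_derive_eq (f : R -> R) t l l' : is_derive f t l -> l = l' -> is_derive f t l'.
Proof. now intros H <-. Qed.

Lemma is_derive_Rpower (u : R -> R) t du e : 0 < u t -> is_derive u t du ->
  is_derive (fun s => Rpower (u s) e) t (e * Rpower (u t) (e - 1) * du).
Proof.
  intros Hu Hd.
  pose proof (is_derive_comp (fun x => Rpower x e) u t _ du
    (proj2 (is_derive_Reals _ _ _) (derivable_pt_lim_power _ e Hu)) Hd) as H.
  replace (e * Rpower (u t) (e - 1) * du) with (scal du (e * Rpower (u t) (e - 1))).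
  - exact H.
  - unfold scal; simpl; unfold mult; simpl; ring.
Qed.

Lemma Rpower_pos x e : 0 < Rpower x e.
Proof. apply exp_pos. Qed.

Lemma Rpower_shift x e : 0 < x ->
  Rpower x e = Rpower x (e - 2) * x ^ 2 /\ Rpower x (e - 1) = Rpower x (e - 2) * x.
Proof.
  intros Hx. split.
  - replace e with (e - 2 + INR 2) at 1 by (simpl; ring). rewrite Rpower_plus, Rpower_pow; auto.
  - replace (e - 1) with (e - 2 + INR 1) by (simpl; ring). rewrite Rpower_plus, Rpower_pow; auto.
    simpl; ring.
Qed.

Lemma Rpower_minus_one x : 0 < x -> Rpower x (-1) = / x.
Proof. intros Hx. replace (-1) with (- (1)) by ring. rewrite Rpower_Ropp, Rpower_1 by exact Hx. reflexivity. Qed.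

Lemma Rpower_minus_two x : 0 < x -> Rpower x (-1 - 1) = / x ^ 2.
Proof.
  intros Hx. replace (-1 - 1) with (- INR 2) by (simpl; ring).
  rewrite Rpower_Ropp, Rpower_pow by exact Hx. reflexivity.
Qed.

Lemma iterD_eq_locally (U : R -> Prop) (h : nat -> R -> R) (f : R -> R) :
  (forall t, U t -> locally t U) ->
  (forall n t, U t -> is_derive (h n) t (h (S n) t)) ->
  (forall t, U t -> f t = h O t) ->
  forall n t, U t -> iterD n f t = h n t.
Proof.
  intros HU Hd Hf n. induction n as [|n IH]; intros t Ut; simpl; auto.
  rewrite (Derive_ext_loc _ (h n) t).
  - apply is_derive_unique; auto.
  - eapply filter_imp; [|apply HU; exact Ut]. intros s Us. apply IH; auto.
Qed.

Lemma locally_pos (f : R -> R) t : ex_derive f t -> 0 < f t -> locally t (fun s => 0 < f s).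
Proof.
  intros Hd Hp. apply ex_derive_continuous in Hd.
  apply Hd. exists (mkposreal _ Hp). intros y Hy.
  change (Rabs (y - f t) < f t) in Hy. apply Rabs_lt_between in Hy. lra.
Qed.

Lemma inv_pow_le_1 P s : 1 <= P -> (/ P) ^ s <= 1.
Proof.
  intros HP. rewrite <- (pow1 s). apply pow_incr. split.
  - left; apply Rinv_0_lt_compat; lra.
  - rewrite <- Rinv_1. apply Rinv_le_contravar; lra.
Qed.

Lemma weight_le P Q W J (s y : nat) : 1 <= P -> 1 <= J -> 0 <= Q -> 0 < W ->
  W <= 3 * P -> Q <= 4 * J * W -> Q <= 12 * J * W ^ 2 -> (1 <= s + y)%nat ->
  (/ P) ^ s * Q ^ y * (W * (/ W) ^ (2 * y)) <= (12 * J) ^ (s + y).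
Proof.
  intros HP HJ HQ HW HWP HQW HQW2 Hsy.
  assert (HiP : forall n, 0 <= (/ P) ^ n <= 1)
    by (intros; split; [apply pow_le; left; apply Rinv_0_lt_compat; lra | apply inv_pow_le_1, HP]).
  assert (H12 : forall n, 1 <= (12 * J) ^ n) by (intros; apply pow_R1_Rle; lra).
  destruct y as [|y].
  - (* no factor Q / W^2: then s >= 1, and one 1 / P absorbs W <= 3 P *)
    destruct s as [|s]; [lia|]. rewrite Nat.add_0_r.
    replace ((/ P) ^ S s * Q ^ 0 * (W * (/ W) ^ (2 * 0))) with ((/ P) ^ s * (W / P))
      by (simpl; field; lra).
    assert (W / P <= 3) by (apply (Rmult_le_reg_r P); [lra|]; field_simplify; lra).
    assert (0 <= W / P) by (unfold Rdiv; apply Rmult_le_pos; [lra | left; apply Rinv_0_lt_compat; lra]).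
    assert (3 <= (12 * J) ^ S s) by (pose proof (H12 s); simpl; nra).
    pose proof (HiP s). nra.
  - replace ((/ P) ^ s * Q ^ S y * (W * (/ W) ^ (2 * S y)))
      with ((/ P) ^ s * (Q / W * (Q / W ^ 2) ^ y)).
    2: { unfold Rdiv. rewrite Rmult_assoc, Rpow_mult_distr, <- pow_inv, <- pow_mult.
         replace (2 * S y)%nat with (S (S (2 * y))) by lia. simpl. field. lra. }
    assert (0 <= Q / W) by (unfold Rdiv; apply Rmult_le_pos; [lra | left; apply Rinv_0_lt_compat; lra]).
    assert (Q / W <= 4 * J) by (apply Rmult_le_reg_r with W; [lra|]; field_simplify; lra).
    assert (0 <= Q / W ^ 2) by (unfold Rdiv; apply Rmult_le_pos; [lra | left; apply Rinv_0_lt_compat; nra]).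
    assert (Q / W ^ 2 <= 12 * J) by (apply Rmult_le_reg_r with (W ^ 2); [nra|]; field_simplify; lra).
    assert (Hy : (Q / W ^ 2) ^ y <= (12 * J) ^ y) by (apply pow_incr; lra).
    assert (0 <= (Q / W ^ 2) ^ y) by (apply pow_le; lra).
    assert (Q / W * (Q / W ^ 2) ^ y <= (12 * J) ^ S y)
      by (change ((12 * J) ^ S y) with (12 * J * (12 * J) ^ y); apply Rmult_le_compat; lra).
    pose proof (H12 s). pose proof (HiP s). rewrite pow_add.
    apply Rmult_le_compat; try apply Rmult_le_pos; lra.
Qed.

(* The monomial x^a q^d (q^0)^e (x^0)^(-s-|a|) W^(n0 - 2(|d|+e)) with coefficient [coef].
   Only s = [excess] is stored: the exponents of x^0 and W are determined by the other
   data (see [eval]), and each partial derivative raises [order] = s + |d| + e by one. *)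
Record monomial := Monomial {
  coef : R;
  xpow : axis -> nat;
  qpow : axis -> nat;
  q0pow : nat;
  excess : nat }.

Definition qdeg (m : monomial) : nat := (deg (qpow m) + q0pow m)%nat.
Definition order (m : monomial) : nat := (excess m + qdeg m)%nat.

Definition coef_sum (L : list monomial) : R :=
  fold_right (fun m acc => Rabs (coef m) + acc) 0 L.

Definition unit_monomial : monomial := Monomial 1 (fun _ => 0%nat) (fun _ => 0%nat) 0 0.

Definition pexp (a : axis -> nat) (s : nat) : R := - INR (s + deg a).
Definition wexp (n0 : R) (d : axis -> nat) (e : nat) : R := n0 - 2 * INR (deg d + e).

Lemma pexp_S a s : pexp a (S s) = pexp a s - 1.
Proof. unfold pexp. rewrite plus_INR, S_INR, plus_INR. ring. Qed.

Lemma pexp_bump a i s : pexp (bump a i) s = pexp a s - 1.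
Proof. unfold pexp. rewrite deg_bump, !plus_INR, S_INR. ring. Qed.

Lemma pexp_lower a i s : a i <> 0%nat -> pexp (lower a i) (S s) = pexp a s.
Proof. intros Ha. unfold pexp. rewrite <- (deg_lower a i Ha), !plus_INR, !S_INR. ring. Qed.

Lemma wexp_S n0 d e : wexp n0 d (S e) = wexp n0 d e - 2.
Proof. unfold wexp. rewrite !plus_INR, S_INR. ring. Qed.

Lemma wexp_bump n0 d i e : wexp n0 (bump d i) e = wexp n0 d e - 2.
Proof. unfold wexp. rewrite deg_bump, !plus_INR, S_INR. ring. Qed.

(* [lower a i] truncates at 0, harmlessly: the first term then has coefficient 0. *)
Definition partial (n0 : R) (i : axis) (m : monomial) : list monomial :=
  let '(Monomial k a d e s) := m in
  [ Monomial (k * INR (a i)) (lower a i) d e (S s);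
    Monomial (k * pexp a s) (bump a i) d e (S s);
    Monomial (k * wexp n0 d e) (bump a i) d (S e) s;
    Monomial (- k * wexp n0 d e) a (bump d i) e s ].

Definition partial_sum (n0 : R) (i : axis) (L : list monomial) : list monomial :=
  flat_map (partial n0 i) L.

Definition partials (n0 : R) (b1 b2 b3 : nat) (L : list monomial) : list monomial :=
  Nat.iter b1 (partial_sum n0 ax1)
    (Nat.iter b2 (partial_sum n0 ax2) (Nat.iter b3 (partial_sum n0 ax3) L)).

Lemma coef_sum_nonneg L : 0 <= coef_sum L.
Proof. induction L as [|m L IH]; simpl; [lra | pose proof (Rabs_pos (coef m)); lra]. Qed.

Lemma order_partial n0 i m m' : In m' (partial n0 i m) -> order m' = S (order m).
Proof.
  destruct m as [k a d e s].
  simpl. intros [<-|[<-|[<-|[<-|[]]]]]; unfold order, qdeg; simpl; rewrite ?deg_bump; lia.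
Qed.

Lemma order_iter_partial_sum n0 i L k : (forall m, In m L -> order m = k) ->
  forall n m, In m (Nat.iter n (partial_sum n0 i) L) -> order m = (n + k)%nat.
Proof.
  intros HL n. induction n as [|n IH]; simpl; auto.
  intros m Hm. apply in_flat_map in Hm as [m' [Hm' Hm]].
  rewrite (order_partial n0 i m' m Hm), (IH m' Hm'). reflexivity.
Qed.

Lemma order_partials n0 b1 b2 b3 m :
  In m (partials n0 b1 b2 b3 [unit_monomial]) -> order m = (b1 + b2 + b3)%nat.
Proof.
  intros Hm. unfold partials in Hm.
  pose proof (order_iter_partial_sum n0 ax3 [unit_monomial] 0
    ltac:(intros m' [<-|[]]; reflexivity) b3) as H3.
  pose proof (order_iter_partial_sum n0 ax2 _ _ H3 b2) as H2.
  rewrite (order_iter_partial_sum n0 ax1 _ _ H2 b1 m Hm). lia.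
Qed.

Lemma Rpower_pexp P a s : 0 < P -> Rpower P (pexp a s) = (/ P) ^ s * (/ P) ^ deg a.
Proof.
  intros HP. unfold pexp.
  rewrite Rpower_Ropp, Rpower_pow, pow_add, !pow_inv by exact HP.
  field; split; apply pow_nonzero; lra.
Qed.

Lemma Rpower_wexp W n0 d e : 0 < W ->
  Rpower W (wexp n0 d e) = Rpower W (n0 - 1) * (W * (/ W) ^ (2 * (deg d + e))).
Proof.
  intros HW. unfold wexp.
  replace (n0 - 2 * INR (deg d + e)) with (n0 - 1 + 1 + - INR (2 * (deg d + e)))
    by (rewrite mult_INR; simpl; ring).
  rewrite !Rpower_plus, Rpower_1, Rpower_Ropp, Rpower_pow, pow_inv by exact HW. ring.
Qed.

Section Symbols.

Variables (c : R) (q : vec) (κ n0 : R).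
Hypothesis c_pos : 0 < c.

Definition eval (m : monomial) (v : vec) : R :=
  coef m * vpow (xpow m) v * vpow (qpow m) q * venergy c q ^ q0pow m
  * Rpower (venergy c v) (pexp (xpow m) (excess m))
  * Rpower (root c q κ v) (wexp n0 (qpow m) (q0pow m)).

Definition eval_sum (L : list monomial) (v : vec) : R :=
  fold_right (fun m acc => eval m v + acc) 0 L.

Lemma eval_sum_app L1 L2 v : eval_sum (L1 ++ L2) v = eval_sum L1 v + eval_sum L2 v.
Proof. induction L1 as [|m L1 IH]; simpl; [ring | rewrite IH; ring]. Qed.

Lemma is_derive_eval m i v t : 0 < radicand c q κ (set_coord i v t) ->
  is_derive (fun s => eval m (set_coord i v s)) t
    (eval_sum (partial n0 i m) (set_coord i v t)).
Proof.
  intros Hr. destruct m as [k a d e s].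
  set (pe := pexp a s). set (we := wexp n0 d e).
  pose proof (venergy_pos c (set_coord i v t) c_pos) as HP.
  assert (HW : 0 < root c q κ (set_coord i v t)) by apply sqrt_lt_R0, Hr.
  apply (is_derive_ext (fun s' => k * vpow d q * venergy c q ^ e *
    (vpow a (set_coord i v s') * Rpower (venergy c (set_coord i v s')) pe
     * Rpower (root c q κ (set_coord i v s')) we))).
  { intros x. change (?l = ?r) with (@eq R l r). unfold eval; cbn [coef xpow qpow q0pow excess]. fold pe we. ring. }
  eapply is_derive_eq.
  { apply is_derive_scal, Derive.is_derive_mult; [apply Derive.is_derive_mult|].
    - apply is_derive_vpow.
    - apply (is_derive_Rpower (fun s' => venergy c (set_coord i v s'))), is_derive_venergy; assumption.
    - apply (is_derive_Rpower (fun s' => root c q κ (set_coord i v s'))), is_derive_root; assumption. }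
  cbv beta. pose proof (coord_set_coord i v t) as Ht.
  set (w := set_coord i v t) in *.
  set (Q := venergy c q) in *. set (P := venergy c w) in *. set (W := root c q κ w) in *.
  unfold eval_sum, partial, eval; cbn [fold_right coef xpow qpow q0pow excess].
  change (?l = ?r) with (@eq R l r). rewrite !vpow_bump, Ht. fold P W Q.
  assert (E1 : INR (a i) = 0 \/ pexp (lower a i) (S s) = pe).
  { destruct (a i) eqn:Ha; [now left | right; apply pexp_lower; lia]. }
  destruct (Rpower_shift P pe HP) as [EP0 EP1]. destruct (Rpower_shift W we HW) as [EW0 EW1].
  change (Q ^ S e) with (Q * Q ^ e).
  destruct E1 as [E1|E1]; rewrite E1, ?pexp_bump, ?pexp_S, !wexp_S, !wexp_bump; fold pe we;
    replace (pe - 1 - 1) with (pe - 2) by ring; rewrite EP0, EP1, EW0, EW1; field; lra.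
Qed.

Lemma is_derive_eval_sum L i v t : 0 < radicand c q κ (set_coord i v t) ->
  is_derive (fun s => eval_sum L (set_coord i v s)) t
    (eval_sum (partial_sum n0 i L) (set_coord i v t)).
Proof.
  intros Hr. induction L as [|m L IH].
  - exact (@is_derive_const R_AbsRing R_NormedModule 0 t).
  - change (partial_sum n0 i (m :: L)) with (partial n0 i m ++ partial_sum n0 i L).
    rewrite eval_sum_app.
    apply (is_derive_plus (fun s => eval m (set_coord i v s))); [apply is_derive_eval|]; assumption.
Qed.

Lemma iterD_eval_sum i v L f :
  (forall t, 0 < radicand c q κ (set_coord i v t) -> f t = eval_sum L (set_coord i v t)) ->
  forall n t, 0 < radicand c q κ (set_coord i v t) ->
  iterD n f t = eval_sum (Nat.iter n (partial_sum n0 i) L) (set_coord i v t).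
Proof.
  intros Hf. apply (iterD_eq_locally (fun t => 0 < radicand c q κ (set_coord i v t))); auto.
  - intros t Ht. apply locally_pos; auto. eexists. apply is_derive_radicand, c_pos.
  - intros n t Ht. apply is_derive_eval_sum, Ht.
Qed.

Lemma dmulti_eval_sum L F b1 b2 b3 p1 p2 p3 :
  (forall x1 x2 x3, 0 < radicand c q κ (Vec x1 x2 x3) ->
     F x1 x2 x3 = eval_sum L (Vec x1 x2 x3)) ->
  0 < radicand c q κ (Vec p1 p2 p3) ->
  dmulti b1 b2 b3 F p1 p2 p3 = eval_sum (partials n0 b1 b2 b3 L) (Vec p1 p2 p3).
Proof.
  intros HF Hp. unfold dmulti, partials.
  apply (iterD_eval_sum ax1 (Vec p1 p2 p3)); auto. intros x1 H1.
  apply (iterD_eval_sum ax2 (Vec x1 p2 p3)); auto. intros x2 H2.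
  apply (iterD_eval_sum ax3 (Vec x1 x2 p3)); auto.
Qed.

Lemma eval_unit_monomial v : 0 < radicand c q κ v ->
  eval_sum [unit_monomial] v = Rpower (root c q κ v) n0.
Proof.
  intros Hr. unfold eval_sum, eval, pexp, wexp, deg, vpow, prod3; simpl.
  rewrite Ropp_0, Rpower_O, Rmult_0_r, Rminus_0_r by apply venergy_pos, c_pos. ring.
Qed.

Lemma eval_abs_le m v : 0 < radicand c q κ v ->
  (forall j, Rabs (coord j v) <= venergy c v) -> (forall j, Rabs (coord j q) <= venergy c q) ->
  Rabs (eval m v) <= Rabs (coef m) *
    ((/ venergy c v) ^ excess m * venergy c q ^ qdeg m
     * (root c q κ v * (/ root c q κ v) ^ (2 * qdeg m))) * Rpower (root c q κ v) (n0 - 1).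
Proof.
  intros Hr Hv Hq. destruct m as [k a d e s]. unfold eval, qdeg; cbn [coef xpow qpow q0pow excess].
  pose proof (venergy_pos c v c_pos) as HP. pose proof (venergy_pos c q c_pos) as HQ.
  assert (HW : 0 < root c q κ v) by apply sqrt_lt_R0, Hr.
  rewrite Rpower_pexp, Rpower_wexp by assumption.
  set (P := venergy c v) in *. set (Q := venergy c q) in *. set (W := root c q κ v) in *.
  set (y := (deg d + e)%nat).
  assert (HPa : 0 < (/ P) ^ deg a) by (apply pow_lt, Rinv_0_lt_compat, HP).
  assert (HPs : 0 < (/ P) ^ s) by (apply pow_lt, Rinv_0_lt_compat, HP).
  assert (HWy : 0 < (/ W) ^ (2 * y)) by (apply pow_lt, Rinv_0_lt_compat, HW).
  assert (HQe : 0 < Q ^ e) by (apply pow_lt, HQ).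
  pose proof (Rpower_pos W (n0 - 1)) as HWn.
  pose proof (vpow_abs_le d q Q Hq) as Hd.
  assert (Ha : Rabs (vpow a v) * (/ P) ^ deg a <= 1).
  { rewrite <- (Rinv_r (P ^ deg a)) by (apply pow_nonzero; lra). rewrite pow_inv.
    apply Rmult_le_compat_r; [left; apply Rinv_0_lt_compat, pow_lt, HP | apply vpow_abs_le, Hv]. }
  rewrite !Rabs_mult, (Rabs_pos_eq (Q ^ e)), (Rabs_pos_eq ((/ P) ^ s)), (Rabs_pos_eq ((/ P) ^ deg a)),
    (Rabs_pos_eq (Rpower W (n0 - 1))), (Rabs_pos_eq W), (Rabs_pos_eq ((/ W) ^ (2 * y))) by lra.
  set (K := Rabs k * (/ P) ^ s * Q ^ e * (W * (/ W) ^ (2 * y)) * Rpower W (n0 - 1)).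
  assert (HK : 0 <= K) by (unfold K; pose proof (Rabs_pos k); repeat apply Rmult_le_pos; lra).
  replace (Rabs k * Rabs (vpow a v) * Rabs (vpow d q) * Q ^ e * ((/ P) ^ s * (/ P) ^ deg a) *
    (Rpower W (n0 - 1) * (W * (/ W) ^ (2 * y))))
    with (K * (Rabs (vpow a v) * (/ P) ^ deg a * Rabs (vpow d q))) by (unfold K; ring).
  replace (Rabs k * ((/ P) ^ s * Q ^ y * (W * (/ W) ^ (2 * y))) * Rpower W (n0 - 1))
    with (K * Q ^ deg d) by (unfold K, y; rewrite pow_add; ring).
  apply Rmult_le_compat_l; [exact HK|].
  pose proof (Rabs_pos (vpow d q)). pose proof (Rabs_pos (vpow a v)). nra.
Qed.

Lemma eval_sum_abs_le L v B :
  (forall m, In m L -> Rabs (eval m v) <= Rabs (coef m) * B) ->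
  Rabs (eval_sum L v) <= coef_sum L * B.
Proof.
  induction L as [|m L IH]; intros HL; simpl.
  - rewrite Rabs_R0. lra.
  - eapply Rle_trans; [apply Rabs_triang|].
    pose proof (HL m (or_introl eq_refl)). pose proof (IH (fun m' H => HL m' (or_intror H))). lra.
Qed.

End Symbols.

Theorem dmulti_root_pow_bound (n0 : R) (b1 b2 b3 : nat) : (0 < b1 + b2 + b3)%nat ->
  exists C : R, 0 <= C /\
  forall c κ q (F : R -> R -> R -> R) p1 p2 p3,
    1 <= c -> Rabs κ <= 2 * c ^ 2 -> vnorm (Vec p1 p2 p3) >= 3 / 2 * venergy c q ->
    (forall x1 x2 x3, 0 < radicand c q κ (Vec x1 x2 x3) ->
       F x1 x2 x3 = Rpower (root c q κ (Vec x1 x2 x3)) n0) ->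
    Rabs (dmulti b1 b2 b3 F p1 p2 p3)
      <= C * vjapan q ^ (b1 + b2 + b3) * Rpower (root c q κ (Vec p1 p2 p3)) (n0 - 1).
Proof.
  intros Hk. set (k := (b1 + b2 + b3)%nat). set (L := partials n0 b1 b2 b3 [unit_monomial]).
  exists (12 ^ k * coef_sum L).
  split; [apply Rmult_le_pos; [apply pow_le; lra | apply coef_sum_nonneg]|].
  intros c κ q F p1 p2 p3 Hc Hκ Hp HF. set (p := Vec p1 p2 p3).
  assert (c_pos : 0 < c) by lra.
  destruct (region_bounds c κ p q Hc Hκ Hp) as (Hr & HP1 & HWP & HQW & HQW2).
  rewrite (dmulti_eval_sum c q κ n0 c_pos [unit_monomial]); auto.
  2: { intros x1 x2 x3 Hx. rewrite HF, eval_unit_monomial; auto. }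
  eapply Rle_trans.
  { apply (eval_sum_abs_le c q κ n0 L p ((12 * vjapan q) ^ k * Rpower (root c q κ p) (n0 - 1))).
    intros m Hm. eapply Rle_trans.
    { apply (eval_abs_le c q κ n0 c_pos); [exact Hr | |]; intros j;
        (eapply Rle_trans; [apply coord_abs_le_vnorm | apply vnorm_le_venergy]). }
    rewrite Rmult_assoc. apply Rmult_le_compat_l; [apply Rabs_pos|].
    apply Rmult_le_compat_r; [left; apply Rpower_pos|].
    pose proof (order_partials n0 b1 b2 b3 m Hm) as Hm'. unfold order in Hm'.
    unfold k. rewrite <- Hm'.
    apply weight_le; auto using vjapan_ge_1; [left; apply venergy_pos, c_pos | apply sqrt_lt_R0, Hr | lia]. }
  rewrite Rpow_mult_distr. right; ring.
Qed.

Lemma rel_g_root c x1 x2 x3 q1 q2 q3 :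
  rel_g c x1 x2 x3 q1 q2 q3 = root c (Vec q1 q2 q3) (- (2 * c ^ 2)) (Vec x1 x2 x3).
Proof. unfold rel_g, root, radicand. f_equal. unfold venergy, vdot. simpl. ring. Qed.

Lemma sqrt_mand_s_root c x1 x2 x3 q1 q2 q3 :
  sqrt (mand_s c x1 x2 x3 q1 q2 q3) = root c (Vec q1 q2 q3) (2 * c ^ 2) (Vec x1 x2 x3).
Proof. unfold mand_s, root, radicand. f_equal. unfold venergy, vdot. simpl. ring. Qed.

Corollary dmulti_root_bounds (b1 b2 b3 : nat) : (0 < b1 + b2 + b3)%nat ->
  exists C : R, 0 < C /\
  forall c κ q (F Finv : R -> R -> R -> R) p1 p2 p3,
    1 <= c -> Rabs κ <= 2 * c ^ 2 -> vnorm (Vec p1 p2 p3) >= 3 / 2 * venergy c q ->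
    (forall x1 x2 x3, 0 < radicand c q κ (Vec x1 x2 x3) ->
       F x1 x2 x3 = root c q κ (Vec x1 x2 x3) /\ Finv x1 x2 x3 = / root c q κ (Vec x1 x2 x3)) ->
    Rabs (dmulti b1 b2 b3 F p1 p2 p3) <= C * vjapan q ^ (b1 + b2 + b3) /\
    Rabs (dmulti b1 b2 b3 Finv p1 p2 p3)
      <= C * vjapan q ^ (b1 + b2 + b3) / root c q κ (Vec p1 p2 p3) ^ 2.
Proof.
  intros Hk.
  destruct (dmulti_root_pow_bound 1 b1 b2 b3 Hk) as (C1 & HC1 & H1).
  destruct (dmulti_root_pow_bound (-1) b1 b2 b3 Hk) as (C2 & HC2 & H2).
  exists (C1 + C2 + 1). split; [lra|].
  intros c κ q F Finv p1 p2 p3 Hc Hκ Hp HF.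
  destruct (region_bounds c κ (Vec p1 p2 p3) q Hc Hκ Hp) as [Hr _].
  assert (HW : 0 < root c q κ (Vec p1 p2 p3)) by apply sqrt_lt_R0, Hr.
  assert (HJ : 0 <= vjapan q ^ (b1 + b2 + b3)) by (apply pow_le, sqrt_pos).
  split.
  - eapply Rle_trans.
    { apply (H1 c κ q F); auto. intros x1 x2 x3 Hx.
      rewrite (proj1 (HF _ _ _ Hx)), Rpower_1 by apply sqrt_lt_R0, Hx. reflexivity. }
    rewrite Rminus_diag, Rpower_O by exact HW. nra.
  - eapply Rle_trans.
    { apply (H2 c κ q Finv); auto. intros x1 x2 x3 Hx.
      rewrite (proj2 (HF _ _ _ Hx)), Rpower_minus_one by apply sqrt_lt_R0, Hx. reflexivity. }
    rewrite Rpower_minus_two by exact HW. unfold Rdiv.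
    apply Rmult_le_compat_r; [left; apply Rinv_0_lt_compat, pow_lt, HW | nra].
Qed.

Theorem lemmaA4 (b1 b2 b3 : nat) (hb : (0 < b1 + b2 + b3)%nat) :
  exists C : R, 0 < C /\
  forall c p1 p2 p3 q1 q2 q3 : R,
    1 <= c ->
    norm3 p1 p2 p3 >= 3 / 2 * energy c q1 q2 q3 ->
    Rabs (dmulti b1 b2 b3 (fun x1 x2 x3 => rel_g c x1 x2 x3 q1 q2 q3) p1 p2 p3)
      <= C * japan q1 q2 q3 ^ (b1 + b2 + b3)
    /\
    Rabs (dmulti b1 b2 b3 (fun x1 x2 x3 => / rel_g c x1 x2 x3 q1 q2 q3) p1 p2 p3)
      <= C * japan q1 q2 q3 ^ (b1 + b2 + b3) / rel_g c p1 p2 p3 q1 q2 q3 ^ 2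
    /\
    Rabs (dmulti b1 b2 b3 (fun x1 x2 x3 => sqrt (mand_s c x1 x2 x3 q1 q2 q3)) p1 p2 p3)
      <= C * japan q1 q2 q3 ^ (b1 + b2 + b3)
    /\
    Rabs (dmulti b1 b2 b3 (fun x1 x2 x3 => / sqrt (mand_s c x1 x2 x3 q1 q2 q3)) p1 p2 p3)
      <= C * japan q1 q2 q3 ^ (b1 + b2 + b3) / rel_g c p1 p2 p3 q1 q2 q3 ^ 2.
Proof.
  destruct (dmulti_root_bounds b1 b2 b3 hb) as (C & HC & H).
  exists C. split; [exact HC|].
  intros c p1 p2 p3 q1 q2 q3 Hc Hp.
  set (q := Vec q1 q2 q3).
  assert (Hκs : Rabs (2 * c ^ 2) <= 2 * c ^ 2) by (rewrite Rabs_pos_eq; nra).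
  assert (Hκg : Rabs (- (2 * c ^ 2)) <= 2 * c ^ 2) by (rewrite Rabs_Ropp; exact Hκs).
  destruct (H c _ q (fun x1 x2 x3 => rel_g c x1 x2 x3 q1 q2 q3)
    (fun x1 x2 x3 => / rel_g c x1 x2 x3 q1 q2 q3) p1 p2 p3 Hc Hκg Hp) as [HG HGinv].
  { intros x1 x2 x3 _. rewrite rel_g_root. auto. }
  destruct (H c _ q (fun x1 x2 x3 => sqrt (mand_s c x1 x2 x3 q1 q2 q3))
    (fun x1 x2 x3 => / sqrt (mand_s c x1 x2 x3 q1 q2 q3)) p1 p2 p3 Hc Hκs Hp) as [HS HSinv].
  { intros x1 x2 x3 _. rewrite sqrt_mand_s_root. auto. }
  destruct (region_bounds c _ (Vec p1 p2 p3) q Hc Hκg Hp) as [Hr _].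
  assert (Hgs : root c q (- (2 * c ^ 2)) (Vec p1 p2 p3) <= root c q (2 * c ^ 2) (Vec p1 p2 p3))
    by (apply sqrt_le_1_alt; unfold radicand; nra).
  rewrite (rel_g_root c p1 p2 p3).
  repeat split; try assumption.
  eapply Rle_trans; [exact HSinv|]. unfold Rdiv. apply Rmult_le_compat_l.
  - apply Rmult_le_pos; [lra | apply pow_le, sqrt_pos].
  - apply Rinv_le_contravar; [apply pow_lt, sqrt_lt_R0, Hr | apply pow_incr; split; [apply sqrt_pos | exact Hgs]].
Qed.
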